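(* Let $N:\mathbb R_+\to\mathbb R_+$ be measurable and let $\mathbf P\subset\mathbb P_{[0,1]}$ be a finite convex collection of bitiles with $\operatorname{mass}(\mathbf P)>0$. Then $\mathbf P=\mathbf P_{hi}\cup\mathbf P_{lo}$ (disjoint union) where (i) $\mathbf P_{hi}$ and $\mathbf P_{lo}$ are both convex; (ii) $\operatorname{mass}(\mathbf P_{lo})\le\frac12\operatorname{mass}(\mathbf P)$; (iii) $\mathbf P_{hi}$ is a convex forest whose trees $T\in\mathcal F$ satisfy $\sum_{T\in\mathcal F}|I_T|\lesssim\operatorname{mass}(\mathbf P)^{-1}$, with an absolute implicit constant.
   Context: Notation. $\mathbb R_+=[0,\infty)$. $\mathcal D_+$ denotes the set of dyadic intervals $[2^jm,2^j(m+1))$ with $j\in\mathbb Z$, $m\in\mathbb Z_{\ge 0}$. A bitile is $P=I_P\times\omega_P$ with $I_P,\omega_P\in\mathcal D_+$ and $|I_P||\omega_P|=2$. $\mathbb P_{all}$ is the set of all bitiles, and $\mathbb P_{[0,1]}=\{P\in\mathbb P_{all}:I_P\subset[0,1]\}$. For bitiles, $P\le P'$ means $I_P\subset I_{P'}$ and $\omega_{P'}\subset\omega_P$. A collection $\mathbf P$ of bitiles is convex if $P,P''\in\mathbf P$, $P'\in\mathbb P_{all}$ and $P\le P'\le P''$ imply $P'\in\mathbf P$. A tree $T$ with top data $(I_T,\xi_T)$, where $I_T\in\mathcal D_+$ and $\xi_T\in\mathbb R_+$ is not a dyadic rational, is a collection of bitiles with $I_P\subset I_T$ and $\xi_T\in\omega_P$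 for all $P\in T$. A forest is a finite collection of bitiles which is a disjoint union of convex trees $T\in\mathcal F$ (the trees together with their top data are part of the data of the forest); it is a convex forest if moreover the whole collection is convex. Mass (relative to the fixed choice function $N$): $E(P)=I_P\cap N^{-1}(\omega_P)$ and $\operatorname{mass}(\mathbf P)=\sup_{P\in\mathbf P}|E(P)|/|I_P|$. *)

From Stdlib Require Import Reals List ClassicalEpsilon.
Open Scope R_scope.

Definition cover_length (A : R -> Prop) (s : R) : Prop :=
  exists a b : nat -> R,
    (forall n, a n <= b n) /\
    (forall x, A x -> exists n, a n <= x < b n) /\
    infinite_sum (fun n => b n - a n) s.

Definition is_glb (S : R -> Prop) (r : R) : Prop :=
  (forall s, S s -> r <= s) /\ (forall r', (forall s, S s -> r' <= s) -> r' <= r).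

(* Lebesgue outer measure |A| (meaningful when A is bounded, which is the only
   case in which it is used below). *)
Definition leb_outer (A : R -> Prop) : R :=
  epsilon (inhabits 0) (fun r => is_glb (cover_length A) r).

Definition bounded_set (E : R -> Prop) : Prop :=
  exists M, forall x, E x -> Rabs x <= M.

(* Caratheodory criterion (test sets restricted to bounded sets). *)
Definition leb_measurable (A : R -> Prop) : Prop :=
  forall E, bounded_set E ->
    leb_outer E = leb_outer (fun x => E x /\ A x) + leb_outer (fun x => E x /\ ~ A x).

(* N : R_+ -> R_+ measurable, modelled as a function R -> R. *)
Definition nonneg_fun (N : R -> R) : Prop := forall x, 0 <= x -> 0 <= N x.
Definition measurable_fun (N : R -> R) : Prop :=
  forall a, leb_measurable (fun x => 0 <= x /\ N x < a).

(* dyad j m  represents  [2^j m, 2^j (m+1)) *)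
Record dyad := Dyad { dj : Z; dm : nat }.

Definition in_dyad (I : dyad) (x : R) : Prop :=
  powerRZ 2 (dj I) * INR (dm I) <= x < powerRZ 2 (dj I) * (INR (dm I) + 1).

Definition dlen (I : dyad) : R := powerRZ 2 (dj I).

Definition dsub (I J : dyad) : Prop := forall x, in_dyad I x -> in_dyad J x.

(* A bitile I x w with |I||w| = 2: I = [2^j m, 2^j(m+1)), w = [2^(1-j) k, 2^(1-j)(k+1)). *)
Record bitile := Bitile { tj : Z; tmI : nat; tmW : nat }.

Definition I_of (P : bitile) : dyad := Dyad (tj P) (tmI P).
Definition w_of (P : bitile) : dyad := Dyad (1 - tj P) (tmW P).

Definition in_P01 (P : bitile) : Prop :=
  forall x, in_dyad (I_of P) x -> 0 <= x <= 1.

Definition tile_le (P P' : bitile) : Prop :=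
  dsub (I_of P) (I_of P') /\ dsub (w_of P') (w_of P).

Definition convex (Ps : list bitile) : Prop :=
  forall P P' P'', In P Ps -> In P'' Ps -> tile_le P P' -> tile_le P' P'' -> In P' Ps.

Definition E_set (N : R -> R) (P : bitile) : R -> Prop :=
  fun x => in_dyad (I_of P) x /\ in_dyad (w_of P) (N x).

Definition tile_density (N : R -> R) (P : bitile) : R :=
  leb_outer (E_set N P) / dlen (I_of P).

(* sup over a finite collection (0 for the empty collection) *)
Definition mass (N : R -> R) (Ps : list bitile) : R :=
  fold_right (fun P acc => Rmax (tile_density N P) acc) 0 Ps.

Definition dyadic_rational (x : R) : Prop :=
  exists (n k : Z), x = IZR n * powerRZ 2 k.

Definition is_tree (T : list bitile) (IT : dyad) (xi : R) : Prop :=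
  0 <= xi /\ ~ dyadic_rational xi /\
  forall P, In P T -> dsub (I_of P) IT /\ in_dyad (w_of P) xi.

Definition tree_data := (list bitile * (dyad * R))%type.

Definition is_forest (Ps : list bitile) (F : list tree_data) : Prop :=
  (forall T, In T F -> is_tree (fst T) (fst (snd T)) (snd (snd T)) /\ convex (fst T)) /\
  (forall P, In P Ps <-> exists T, In T F /\ In P (fst T)) /\
  (forall i j d P, (i < length F)%nat -> (j < length F)%nat -> i <> j ->
      In P (fst (nth i F d)) -> ~ In P (fst (nth j F d))).

Definition is_convex_forest (Ps : list bitile) (F : list tree_data) : Prop :=
  is_forest Ps F /\ convex Ps.

Definition sum_top_lengths (F : list tree_data) : R :=
  fold_right (fun T acc => dlen (fst (snd T)) + acc) 0 F.

From Stdlib Require Import Reals List ClassicalEpsilon ZArith Znumtheory Lia Lra.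
Open Scope R_scope.

(* Call a tile Q of Ps big when |E(Q)|/|I_Q| > mass(Ps)/2.  The high part
   Phi consists of the tiles lying below some big tile, the low part Plo of
   the others.  Phi is a down-set and Plo an up-set of the convex Ps, hence
   both are convex, and no tile of Plo is big, so mass(Plo) <= mass(Ps)/2.
   Each high tile is attached to the first maximal big tile ("top") above it;
   the tiles attached to a top Q form a convex tree with top interval I_Q and
   frequency a non-dyadic point of omega_Q.  Two distinct tops are
   incomparable, so their sets E(Q) are disjoint; these sets are measurable
   subsets of [0,1], whence sum |I_Q| <= (2/mass) sum |E(Q)| <= 4/mass. *)

Lemma partial_sums_mono (f : nat -> R) : (forall n, 0 <= f n) ->
  forall m n, (m <= n)%nat -> sum_f_R0 f m <= sum_f_R0 f n.
Proof.
  intros Hf m n Hmn. induction Hmn as [|n _ IH]; [lra|].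
  simpl. specialize (Hf (S n)). lra.
Qed.

Lemma infinite_sum_nonneg (f : nat -> R) (l : R) :
  infinite_sum f l -> (forall n, 0 <= f n) -> 0 <= l.
Proof.
  intros Hs Hf.
  assert (Hgrow : Un_growing (sum_f_R0 f))
    by (intro n; apply partial_sums_mono; auto).
  pose proof (growing_ineq _ _ Hgrow Hs 0%nat) as H0. simpl in H0.
  specialize (Hf 0%nat). lra.
Qed.

Definition interleave (f g : nat -> R) (n : nat) : R :=
  if Nat.even n then f (Nat.div2 n) else g (Nat.div2 n).

Lemma interleave_even f g k : interleave f g (2 * k) = f k.
Proof. unfold interleave. rewrite Nat.even_mul, Nat.div2_double. reflexivity. Qed.

Lemma interleave_odd f g k : interleave f g (S (2 * k)) = g k.
Proof.
  unfold interleave. rewrite Nat.even_succ, Nat.odd_mul, Nat.div2_succ_double.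
  reflexivity.
Qed.

Lemma interleave_partial_sum f g k :
  sum_f_R0 (interleave f g) (S (2 * k)) = sum_f_R0 f k + sum_f_R0 g k.
Proof.
  induction k as [|k IH].
  - unfold interleave. simpl. lra.
  - replace (S (2 * S k)) with (S (S (S (2 * k)))) by lia.
    rewrite tech5, tech5, IH, (tech5 f), (tech5 g).
    replace (S (S (2 * k))) with (2 * S k)%nat by lia.
    rewrite interleave_even, interleave_odd. lra.
Qed.

Lemma mono_cv_from_odd (u : nat -> R) (L : R) :
  (forall m n, (m <= n)%nat -> u m <= u n) ->
  Un_cv (fun k => u (S (2 * k))) L -> Un_cv u L.
Proof.
  intros Hm Hc.
  assert (Hle : forall k, u (S (2 * k)) <= L).
  { apply growing_ineq; auto. intro n. apply Hm. lia. }
  intros eps He. destruct (Hc eps He) as [K HK]. exists (S (2 * K)). intros n Hn.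
  assert (A1 : u (S (2 * K)) <= u n) by (apply Hm; lia).
  assert (A2 : u n <= u (S (2 * n))) by (apply Hm; lia).
  specialize (Hle n). specialize (HK K (le_n _)).
  unfold Rdist in *. apply Rabs_def2 in HK. apply Rabs_def1; lra.
Qed.

Lemma interleave_infinite_sum f g s1 s2 :
  (forall n, 0 <= f n) -> (forall n, 0 <= g n) ->
  infinite_sum f s1 -> infinite_sum g s2 -> infinite_sum (interleave f g) (s1 + s2).
Proof.
  intros Hf Hg H1 H2. apply mono_cv_from_odd.
  - apply partial_sums_mono. intro n. unfold interleave. destruct (Nat.even n); auto.
  - apply (Un_cv_ext (fun k => sum_f_R0 f k + sum_f_R0 g k)).
    + intro k. symmetry. apply interleave_partial_sum.
    + apply CV_plus; auto.
Qed.

Lemma cover_length_nonneg A s : cover_length A s -> 0 <= s.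
Proof.
  intros (a & b & Hab & _ & Hs). apply (infinite_sum_nonneg _ _ Hs).
  intro n. specialize (Hab n). lra.
Qed.

Definition single_left (l : R) (n : nat) : R := match n with O => l | _ => 0 end.
Definition single_right (r : R) (n : nat) : R := match n with O => r | _ => 0 end.

Lemma single_interval_cover A l r : l <= r -> (forall x, A x -> l <= x < r) ->
  cover_length A (r - l).
Proof.
  intros Hlr HA. exists (single_left l), (single_right r). split; [|split].
  - intros [|n]; simpl; lra.
  - intros x Hx. exists 0%nat. simpl. auto.
  - intros eps He. exists 0%nat. intros n _.
    replace (sum_f_R0 (fun n => single_right r n - single_left l n) n) with (r - l).
    + unfold Rdist. rewrite Rminus_diag, Rabs_R0. lra.
    + induction n as [|n IH]; [reflexivity|]. simpl. rewrite <- IH. lra.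
Qed.

Lemma bounded_sub A B : bounded_set B -> (forall x, A x -> B x) -> bounded_set A.
Proof. intros [M HM] H. exists M. auto. Qed.

(* For bounded sets the infimum defining [leb_outer] exists, so the choice
   made by [epsilon] is the greatest lower bound of the cover lengths. *)
Lemma outer_is_glb A : bounded_set A -> is_glb (cover_length A) (leb_outer A).
Proof.
  intros HA. unfold leb_outer. apply epsilon_spec.
  assert (Hcov : exists s, cover_length A s).
  { destruct HA as [M HM]. exists ((Rabs M + 1) - (- (Rabs M + 1))).
    apply single_interval_cover; [pose proof (Rabs_pos M); lra|].
    intros x Hx. specialize (HM x Hx). pose proof (Rle_abs M).
    pose proof (Rle_abs x). pose proof (Rle_abs (- x)). rewrite Rabs_Ropp in *. lra. }
  destruct Hcov as [s0 Hs0].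
  destruct (completeness (fun y => cover_length A (- y))) as [m [Hub Hlub]].
  - exists 0. intros y Hy. apply cover_length_nonneg in Hy. lra.
  - exists (- s0). rewrite Ropp_involutive. exact Hs0.
  - exists (- m). split.
    + intros s Hs. assert (- s <= m) by (apply Hub; rewrite Ropp_involutive; auto). lra.
    + intros r' Hr'. assert (m <= - r'); [|lra].
      apply Hlub. intros y Hy. specialize (Hr' _ Hy). lra.
Qed.

Lemma outer_le_cover A s : bounded_set A -> cover_length A s -> leb_outer A <= s.
Proof. intros HA Hs. apply (proj1 (outer_is_glb A HA)). auto. Qed.

Lemma outer_ge A r : bounded_set A -> (forall s, cover_length A s -> r <= s) ->
  r <= leb_outer A.
Proof. intros HA Hs. apply (proj2 (outer_is_glb A HA)). auto. Qed.

Lemma outer_nonneg A : bounded_set A -> 0 <= leb_outer A.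
Proof. intros HA. apply outer_ge; auto. apply cover_length_nonneg. Qed.

Lemma outer_le_interval A l r : l <= r -> (forall x, A x -> l <= x < r) ->
  leb_outer A <= r - l.
Proof.
  intros Hlr HA. apply outer_le_cover; [|apply single_interval_cover; auto].
  exists (Rabs l + Rabs r). intros x Hx. specialize (HA x Hx).
  pose proof (Rle_abs l). pose proof (Rle_abs (- l)). pose proof (Rle_abs r).
  pose proof (Rabs_pos l). pose proof (Rabs_pos r).
  rewrite Rabs_Ropp in *. apply Rabs_le. lra.
Qed.

Lemma outer_mono A B : bounded_set B -> (forall x, A x -> B x) ->
  leb_outer A <= leb_outer B.
Proof.
  intros HB H. assert (HA : bounded_set A) by (eapply bounded_sub; eauto).
  apply outer_ge; auto.
  intros s (a & b & Hab & Hc & Hs). apply outer_le_cover; auto.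
  exists a, b. auto.
Qed.

Lemma outer_ext A B : bounded_set B -> (forall x, A x <-> B x) ->
  leb_outer A = leb_outer B.
Proof.
  intros HB H. assert (HA : bounded_set A) by (eapply bounded_sub; eauto; firstorder).
  apply Rle_antisym; apply outer_mono; firstorder.
Qed.

Lemma cover_union A B C sB sC : (forall x, A x -> B x \/ C x) ->
  cover_length B sB -> cover_length C sC -> cover_length A (sB + sC).
Proof.
  intros H (a & b & Hab & Hc & Hs) (a' & b' & Hab' & Hc' & Hs').
  exists (interleave a a'), (interleave b b'). split; [|split].
  - intro n. unfold interleave. destruct (Nat.even n); auto.
  - intros x Hx. destruct (H x Hx) as [Hb|Hb].
    + destruct (Hc x Hb) as [n Hn]. exists (2 * n)%nat.
      rewrite !interleave_even. auto.
    + destruct (Hc' x Hb) as [n Hn]. exists (S (2 * n)).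
      rewrite !interleave_odd. auto.
  - apply (Un_cv_ext (sum_f_R0 (interleave (fun n => b n - a n) (fun n => b' n - a' n)))).
    + intro n. apply sum_eq. intros i _. unfold interleave. destruct (Nat.even i); auto.
    + apply interleave_infinite_sum; auto;
        intro n; [specialize (Hab n) | specialize (Hab' n)]; lra.
Qed.

Lemma outer_subadd A B C : bounded_set B -> bounded_set C ->
  (forall x, A x -> B x \/ C x) -> leb_outer A <= leb_outer B + leb_outer C.
Proof.
  intros HB HC H.
  assert (HA : bounded_set A).
  { destruct HB as [M1 H1], HC as [M2 H2]. exists (Rmax M1 M2). intros x Hx.
    destruct (H x Hx).
    - apply Rle_trans with M1; [apply H1; auto | apply Rmax_l].
    - apply Rle_trans with M2; [apply H2; auto | apply Rmax_r]. }
  cut (leb_outer A - leb_outer B <= leb_outer C); [lra|].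
  apply outer_ge; auto. intros sC HsC.
  cut (leb_outer A - sC <= leb_outer B); [lra|].
  apply outer_ge; auto. intros sB HsB.
  cut (leb_outer A <= sB + sC); [lra|].
  apply outer_le_cover; auto. eapply cover_union; eauto.
Qed.

Lemma meas_ext A B : (forall x, A x <-> B x) -> leb_measurable A -> leb_measurable B.
Proof.
  intros H HA E HE. rewrite (HA E HE).
  rewrite (outer_ext (fun x => E x /\ A x) (fun x => E x /\ B x)).
  - rewrite (outer_ext (fun x => E x /\ ~ A x) (fun x => E x /\ ~ B x)); [reflexivity| |firstorder].
    apply (bounded_sub _ E HE); tauto.
  - apply (bounded_sub _ E HE); tauto.
  - firstorder.
Qed.

Lemma meas_compl A : leb_measurable A -> leb_measurable (fun x => ~ A x).
Proof.
  intros HA E HE. rewrite (HA E HE).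
  rewrite (outer_ext (fun x => E x /\ ~ ~ A x) (fun x => E x /\ A x)).
  - lra.
  - apply (bounded_sub _ E HE). tauto.
  - intro x. split; [intros [? ?]; split; auto; apply NNPP; auto | tauto].
Qed.

Lemma meas_inter A B : leb_measurable A -> leb_measurable B ->
  leb_measurable (fun x => A x /\ B x).
Proof.
  intros HA HB E HE.
  assert (Hbd : forall P : R -> Prop, bounded_set (fun x => E x /\ P x))
    by (intro P; eapply bounded_sub; eauto; tauto).
  apply Rle_antisym.
  - apply outer_subadd; auto. intros x Hx. destruct (classic (A x /\ B x)); tauto.
  - (* split [E] along [A], then [E /\ A] along [B] *)
    rewrite (HA E HE), (HB _ (Hbd A)).
    rewrite (outer_ext (fun x => E x /\ A x /\ B x) (fun x => (E x /\ A x) /\ B x));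
      [|apply (bounded_sub _ E HE); tauto | tauto].
    assert (leb_outer (fun x => E x /\ ~ (A x /\ B x)) <=
       leb_outer (fun x => (E x /\ A x) /\ ~ B x) + leb_outer (fun x => E x /\ ~ A x)).
    { apply outer_subadd; [eapply bounded_sub; [apply (Hbd A)|tauto] | auto |].
      intros x [Hx Hn]. destruct (classic (A x)); tauto. }
    lra.
Qed.

Lemma clip_lengths a b c : a <= b ->
  0 <= Rmin b c - Rmin a c <= b - a /\ 0 <= Rmax b c - Rmax a c <= b - a /\
  (Rmin b c - Rmin a c) + (Rmax b c - Rmax a c) = b - a.
Proof. intros H. unfold Rmin, Rmax. destruct (Rle_dec b c), (Rle_dec a c); lra. Qed.

(* Half-lines are measurable: a cover of [E] clipped at [c] yields covers of
   the two halves of [E] whose lengths add up to the original length. *)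
Lemma meas_halfline c : leb_measurable (fun x => c <= x).
Proof.
  intros E HE.
  assert (Hbd : forall P : R -> Prop, bounded_set (fun x => E x /\ P x))
    by (intro P; apply (bounded_sub _ E HE); tauto).
  apply Rle_antisym.
  - apply outer_subadd; auto. intros x Hx. destruct (Rle_dec c x); tauto.
  - apply outer_ge; auto. intros s (a & b & Hab & Hc & Hs).
    destruct (Rseries_CV_comp (fun n => Rmin (b n) c - Rmin (a n) c) (fun n => b n - a n))
      as [s1 H1]; [intro n; apply (clip_lengths _ _ c (Hab n)) | exists s; exact Hs|].
    destruct (Rseries_CV_comp (fun n => Rmax (b n) c - Rmax (a n) c) (fun n => b n - a n))
      as [s2 H2]; [intro n; apply (clip_lengths _ _ c (Hab n)) | exists s; exact Hs|].
    assert (Hsum : s1 + s2 = s).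
    { eapply UL_sequence; [apply CV_plus; [exact H1 | exact H2]|].
      eapply Un_cv_ext; [|exact Hs]. intro n. simpl.
      rewrite <- plus_sum. apply sum_eq. intros i _. symmetry.
      apply (clip_lengths _ _ c (Hab i)). }
    assert (leb_outer (fun x => E x /\ c <= x) <= s2).
    { apply outer_le_cover; auto.
      exists (fun n => Rmax (a n) c), (fun n => Rmax (b n) c). split; [|split].
      - intro n. specialize (Hab n). unfold Rmax.
        destruct (Rle_dec (a n) c), (Rle_dec (b n) c); lra.
      - intros x [Hx Hcx]. destruct (Hc x Hx) as [n Hn]. exists n. unfold Rmax.
        destruct (Rle_dec (a n) c), (Rle_dec (b n) c); lra.
      - exact H2. }
    assert (leb_outer (fun x => E x /\ ~ c <= x) <= s1).
    { apply outer_le_cover; auto.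
      exists (fun n => Rmin (a n) c), (fun n => Rmin (b n) c). split; [|split].
      - intro n. specialize (Hab n). unfold Rmin.
        destruct (Rle_dec (a n) c), (Rle_dec (b n) c); lra.
      - intros x [Hx Hcx]. destruct (Hc x Hx) as [n Hn]. exists n. unfold Rmin.
        destruct (Rle_dec (a n) c), (Rle_dec (b n) c); lra.
      - exact H1. }
    lra.
Qed.

(* The set E(P) = I_P /\ N^{-1}(omega_P) is measurable when N is: it is
   {N < right end of omega_P} \ {N < left end of omega_P}, intersected with I_P. *)
Lemma E_set_measurable N P : measurable_fun N -> leb_measurable (E_set N P).
Proof.
  intros HN.
  set (l := powerRZ 2 (dj (I_of P)) * INR (dm (I_of P))).
  set (r := powerRZ 2 (dj (I_of P)) * (INR (dm (I_of P)) + 1)).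
  set (c := powerRZ 2 (dj (w_of P)) * INR (dm (w_of P))).
  set (d := powerRZ 2 (dj (w_of P)) * (INR (dm (w_of P)) + 1)).
  assert (Hl : 0 <= l) by (apply Rmult_le_pos; [apply powerRZ_le; lra | apply pos_INR]).
  apply (meas_ext (fun x => (((0 <= x) /\ (N x < d)) /\ ~ ((0 <= x) /\ (N x < c))) /\
       ((l <= x) /\ ~ (r <= x)))).
  - intro x. unfold E_set, in_dyad. fold l r c d. split.
    + intros [[[H1 H2] H3] [H4 H5]]. split; split; try lra.
    + intros [[H1 H2] [H3 H4]].
      split; [split; [split; lra|] | split; [lra|]]; intros HH; [destruct HH as [_ HH]|]; lra.
  - apply meas_inter; apply meas_inter.
    + apply HN.
    + apply meas_compl, HN.
    + apply meas_halfline.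
    + apply meas_compl, meas_halfline.
Qed.

Definition family_union {T : Type} (S : T -> R -> Prop) (L : list T) (x : R) : Prop :=
  exists Q, In Q L /\ S Q x.

Definition family_sum {T : Type} (S : T -> R -> Prop) (L : list T) : R :=
  fold_right (fun Q acc => leb_outer (S Q) + acc) 0 L.

Lemma outer_disjoint_family {T : Type} (S : T -> R -> Prop) (L : list T) :
  NoDup L -> bounded_set (family_union S L) ->
  (forall Q, In Q L -> leb_measurable (S Q)) ->
  (forall Q Q' x, In Q L -> In Q' L -> Q <> Q' -> S Q x -> S Q' x -> False) ->
  family_sum S L = leb_outer (family_union S L).
Proof.
  induction L as [|Q L IH]; intros Hnd Hbd Hmeas Hdisj; simpl.
  - apply Rle_antisym; [apply outer_nonneg; auto|].
    replace 0 with (0 - 0) at 1 by ring.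
    apply outer_le_interval; [lra|]. intros x (Q & [] & _).
  - inversion Hnd as [|? ? HQ HndL]; subst.
    assert (HbdL : bounded_set (family_union S L))
      by (apply (bounded_sub _ _ Hbd); intros x (Q' & ? & ?); exists Q'; simpl; auto).
    (* split the union along the measurable set [S Q] *)
    rewrite (Hmeas Q (or_introl eq_refl) _ Hbd).
    rewrite (outer_ext (fun x => family_union S (Q :: L) x /\ S Q x) (S Q)).
    + rewrite (outer_ext (fun x => family_union S (Q :: L) x /\ ~ S Q x) (family_union S L)).
      * rewrite IH; auto.
        -- intros Q1 HQ1. apply Hmeas. simpl. auto.
        -- intros Q1 Q2 x H1 H2. apply Hdisj; simpl; auto.
      * exact HbdL.
      * intro x. split.
        -- intros [(Q' & [<-|HQ'] & Hx) Hn]; [contradiction | exists Q'; auto].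
        -- intros (Q' & HQ' & Hx). split; [exists Q'; simpl; auto|].
           intro HQx. apply (Hdisj Q Q' x); simpl; auto. intros <-. auto.
    + apply (bounded_sub _ _ Hbd). intros x Hx. exists Q. simpl. auto.
    + intro x. split; [tauto|]. intro Hx. split; auto. exists Q. simpl. auto.
Qed.

Lemma pow2_pos j : 0 < powerRZ 2 j.
Proof. apply powerRZ_lt. lra. Qed.

Lemma pow2_shift j n : powerRZ 2 (j + Z.of_nat n) = powerRZ 2 j * 2 ^ n.
Proof. rewrite powerRZ_add by lra. rewrite pow_powerRZ. reflexivity. Qed.

Lemma pow2_lt i j : (j < i)%Z -> powerRZ 2 j < powerRZ 2 i.
Proof.
  intros H. replace i with (j + Z.of_nat (Z.to_nat (i - j)))%Z by lia.
  rewrite pow2_shift. destruct (Z.to_nat (i - j)) as [|n] eqn:E; [lia|].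
  simpl. pose proof (pow2_pos j). pose proof (pow_R1_Rle 2 n ltac:(lra)). nra.
Qed.

Definition dleft (K : dyad) : R := powerRZ 2 (dj K) * INR (dm K).

Lemma in_dyad_iff K x : in_dyad K x <-> dleft K <= x < dleft K + dlen K.
Proof.
  unfold in_dyad, dleft, dlen.
  replace (powerRZ 2 (dj K) * (INR (dm K) + 1))
    with (powerRZ 2 (dj K) * INR (dm K) + powerRZ 2 (dj K)) by ring.
  tauto.
Qed.

Lemma in_dyad_nonneg K x : in_dyad K x -> 0 <= x.
Proof.
  rewrite in_dyad_iff. intros [H _]. eapply Rle_trans; [|exact H].
  apply Rmult_le_pos; [apply powerRZ_le; lra | apply pos_INR].
Qed.

Lemma dsub_scale I J : dsub I J -> (dj I <= dj J)%Z /\ (dj I = dj J -> dm I = dm J).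
Proof.
  intros H. pose proof (pow2_pos (dj I)). pose proof (pow2_pos (dj J)).
  assert (HlI : in_dyad J (dleft I)) by (apply H; rewrite in_dyad_iff; unfold dlen; lra).
  rewrite in_dyad_iff in HlI.
  assert (Hend : dleft I + dlen I <= dleft J + dlen J).
  { destruct (Rle_dec (dleft I + dlen I) (dleft J + dlen J)) as [|Hn]; auto. exfalso.
    assert (HI : in_dyad I (dleft J + dlen J)) by (rewrite in_dyad_iff; lra).
    apply H in HI. rewrite in_dyad_iff in HI. lra. }
  split.
  - destruct (Z.lt_ge_cases (dj J) (dj I)) as [Hlt|]; [|lia].
    apply pow2_lt in Hlt. unfold dlen in *. lra.
  - intros Heq. unfold dlen, dleft in *. rewrite Heq in *.
    apply INR_eq, (Rmult_eq_reg_l (powerRZ 2 (dj J))); lra.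
Qed.

Lemma dyad_nested I J x : in_dyad I x -> in_dyad J x -> (dj I <= dj J)%Z -> dsub I J.
Proof.
  intros HI HJ Hle.
  set (k := Z.to_nat (dj J - dj I)).
  assert (Ej : dj J = (dj I + Z.of_nat k)%Z) by (unfold k; lia).
  set (p := powerRZ 2 (dj I)). assert (Hp : 0 < p) by apply pow2_pos.
  set (K := (2 ^ k)%nat).
  (* in units of [p], I = [dm I, dm I + 1) and J = [K dm J, K dm J + K) *)
  assert (HlJ : dleft J = p * INR (K * dm J)).
  { unfold dleft. rewrite Ej, pow2_shift, mult_INR. unfold K. rewrite pow_INR.
    simpl (INR 2). fold p. replace (1 + 1) with 2 by ring. ring. }
  assert (HrJ : dleft J + dlen J = p * INR (K * dm J + K)).
  { rewrite HlJ. unfold dlen. rewrite Ej, pow2_shift, plus_INR. unfold K.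
    rewrite pow_INR. simpl (INR 2). fold p. replace (1 + 1) with 2 by ring. ring. }
  assert (HlI : dleft I = p * INR (dm I)) by reflexivity.
  assert (HrI : dleft I + dlen I = p * INR (dm I + 1))
    by (rewrite plus_INR; unfold dleft, dlen; fold p; simpl; ring).
  rewrite in_dyad_iff in HI, HJ.
  assert (A1 : (K * dm J <= dm I)%nat).
  { assert (p * INR (K * dm J) < p * INR (dm I + 1)) as Hlt by lra.
    apply Rmult_lt_reg_l, INR_lt in Hlt; auto. lia. }
  assert (A2 : (dm I + 1 <= K * dm J + K)%nat).
  { assert (p * INR (dm I) < p * INR (K * dm J + K)) as Hlt by lra.
    apply Rmult_lt_reg_l, INR_lt in Hlt; auto. lia. }
  apply le_INR in A1, A2.
  intros z Hz. rewrite in_dyad_iff in *. split.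
  - rewrite HlJ. apply Rle_trans with (p * INR (dm I)); [apply Rmult_le_compat_l|]; lra.
  - rewrite HrJ. apply Rlt_le_trans with (p * INR (dm I + 1)); [lra|].
    apply Rmult_le_compat_l; lra.
Qed.

Lemma tile_le_refl P : tile_le P P.
Proof. split; intros x Hx; auto. Qed.

Lemma tile_le_trans P Q R : tile_le P Q -> tile_le Q R -> tile_le P R.
Proof. intros [H1 H2] [H3 H4]. split; intros x Hx; auto. Qed.

Lemma tile_le_eq P Q : tile_le P Q -> (tj Q <= tj P)%Z -> P = Q.
Proof.
  intros [HI Hw] Hj. apply dsub_scale in HI, Hw. unfold I_of, w_of in *. cbn [dj dm] in *.
  destruct HI as [HI1 HI2], Hw as [Hw1 Hw2].
  assert (E1 : tmI P = tmI Q) by (apply HI2; lia).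
  assert (E2 : tmW P = tmW Q) by (symmetry; apply Hw2; lia).
  assert (E3 : tj P = tj Q) by lia.
  destruct P, Q. cbn in *. congruence.
Qed.

(* If E(Q) and E(Q') share a point x, then I_Q, I_Q' contain x and omega_Q, omega_Q'
   contain N x, so the two bitiles are comparable. *)
Lemma E_sets_meet_comparable N Q Q' x :
  E_set N Q x -> E_set N Q' x -> tile_le Q Q' \/ tile_le Q' Q.
Proof.
  intros [HI Hw] [HI' Hw'].
  destruct (Z.le_ge_cases (tj Q) (tj Q')); [left | right];
    split; eapply dyad_nested; eauto; unfold I_of, w_of; cbn [dj]; lia.
Qed.

(* A non-dyadic frequency inside omega_Q: the point one third of the way along. *)

Definition xi_of (Q : bitile) : R := powerRZ 2 (dj (w_of Q)) * (INR (dm (w_of Q)) + / 3).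

Lemma xi_in Q : in_dyad (w_of Q) (xi_of Q).
Proof.
  unfold in_dyad, xi_of. pose proof (pow2_pos (dj (w_of Q))).
  split; [apply Rmult_le_compat_l | apply Rmult_lt_compat_l]; lra.
Qed.

Lemma three_not_div_pow2 t : ~ (3 | 2 ^ Z.of_nat t)%Z.
Proof.
  induction t as [|t IH].
  - intros [c Hc]. simpl in Hc. lia.
  - rewrite Nat2Z.inj_succ, Z.pow_succ_r by lia. intro H.
    destruct (prime_mult 3 prime_3 _ _ H) as [[c Hc]|]; [lia | auto].
Qed.

(* 2^k (m + 1/3) = n 2^e would make 3 divide a power of two (or 3m+1 divisible by 3). *)
Lemma xi_nondyadic Q : ~ dyadic_rational (xi_of Q).
Proof.
  unfold xi_of. set (k := dj (w_of Q)). set (m := dm (w_of Q)).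
  intros (n & e & He).
  replace e with (k + (e - k))%Z in He by lia. rewrite powerRZ_add in He by lra.
  pose proof (pow2_pos k).
  assert (H1 : INR m + / 3 = IZR n * powerRZ 2 (e - k)).
  { apply Rmult_eq_reg_l with (powerRZ 2 k); [rewrite He; ring | lra]. }
  rewrite INR_IZR_INZ in H1.
  destruct (Z.le_ge_cases 0 (e - k)) as [Hd|Hd].
  - replace (e - k)%Z with (Z.of_nat (Z.to_nat (e - k))) in H1 by lia.
    rewrite <- pow_powerRZ in H1. replace 2 with (IZR 2) in H1 by reflexivity.
    rewrite pow_IZR in H1.
    assert (H2 : IZR (3 * Z.of_nat m + 1) =
                 IZR (3 * (n * 2 ^ Z.of_nat (Z.to_nat (e - k))))).
    { rewrite plus_IZR, !mult_IZR. rewrite <- H1. simpl. field. }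
    apply eq_IZR in H2. lia.
  - replace (e - k)%Z with (- Z.of_nat (Z.to_nat (k - e)))%Z in H1 by lia.
    rewrite powerRZ_neg', <- pow_powerRZ in H1. replace 2 with (IZR 2) in H1 by reflexivity.
    rewrite pow_IZR in H1. set (t := Z.to_nat (k - e)) in *.
    assert (Hp : IZR (2 ^ Z.of_nat t) <> 0)
      by (rewrite <- pow_IZR; apply pow_nonzero; discrR).
    assert (H2 : IZR ((3 * Z.of_nat m + 1) * 2 ^ Z.of_nat t) = IZR (3 * n)).
    { rewrite !mult_IZR, plus_IZR, mult_IZR.
      replace (IZR 3 * IZR (Z.of_nat m) + IZR 1) with (3 * (IZR (Z.of_nat m) + / 3))
        by (simpl; field).
      rewrite H1. field. auto. }
    apply eq_IZR in H2.
    assert (Hdiv : (3 | (3 * Z.of_nat m + 1) * 2 ^ Z.of_nat t)%Z) by (exists n; lia).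
    destruct (prime_mult 3 prime_3 _ _ Hdiv) as [[c Hc]|Hc]; [lia|].
    exact (three_not_div_pow2 t Hc).
Qed.

Definition dec (P : Prop) : bool := if excluded_middle_informative P then true else false.

Lemma dec_true P : dec P = true <-> P.
Proof. unfold dec. destruct (excluded_middle_informative P); split; auto; discriminate. Qed.

Lemma dec_false P : dec P = false <-> ~ P.
Proof.
  unfold dec. destruct (excluded_middle_informative P); split; auto; try discriminate; tauto.
Qed.

Definition bitile_eq_dec : forall x y : bitile, {x = y} + {x <> y}.
Proof. decide equality; [apply Nat.eq_dec | apply Nat.eq_dec | apply Z.eq_dec]. Defined.

Lemma find_stronger (A : Type) (g h : A -> bool) (l : list A) (Q : A) :
  (forall x, In x l -> h x = true -> g x = true) -> find g l = Some Q -> h Q = true ->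
  find h l = Some Q.
Proof.
  induction l as [|a l IH]; simpl; intros Hs Hg Hh; [discriminate|].
  destruct (g a) eqn:Ega.
  - injection Hg as <-. rewrite Hh. reflexivity.
  - destruct (h a) eqn:Eha.
    + rewrite (Hs a (or_introl eq_refl) Eha) in Ega. discriminate.
    + apply IH; auto.
Qed.

Lemma list_argmax (A : Type) (f : A -> Z) (l : list A) :
  l <> nil -> exists x, In x l /\ forall y, In y l -> (f y <= f x)%Z.
Proof.
  induction l as [|a l IH]; intros H; [congruence|].
  destruct l as [|b l'].
  - exists a. split; [simpl; auto|]. intros y [<-|[]]. lia.
  - destruct IH as (x & Hx & Hm); [discriminate|].
    destruct (Z.le_ge_cases (f a) (f x)).
    + exists x. split; [simpl; auto|]. intros y [<-|Hy]; auto.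
    + exists a. split; [simpl; auto|]. intros y [<-|Hy]; [lia|]. specialize (Hm y Hy). lia.
Qed.

Lemma list_sum_le_scaled (A : Type) (f g : A -> R) (c : R) (l : list A) :
  (forall x, In x l -> f x <= c * g x) ->
  fold_right (fun x acc => f x + acc) 0 l <= c * fold_right (fun x acc => g x + acc) 0 l.
Proof.
  induction l as [|a l IH]; simpl; intros H; [lra|].
  rewrite Rmult_plus_distr_l.
  apply Rplus_le_compat; [apply H; auto | apply IH; auto].
Qed.

Lemma sum_top_lengths_map (f : bitile -> tree_data) (l : list bitile) :
  sum_top_lengths (map f l) = fold_right (fun Q acc => dlen (fst (snd (f Q))) + acc) 0 l.
Proof. induction l as [|Q l IH]; simpl; [|rewrite <- IH]; reflexivity. Qed.

Lemma mass_nonneg N L : 0 <= mass N L.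
Proof. induction L as [|a L IH]; simpl; [lra|]. eapply Rle_trans; [exact IH | apply Rmax_r]. Qed.

Lemma mass_le N L c : 0 <= c -> (forall P, In P L -> tile_density N P <= c) -> mass N L <= c.
Proof.
  induction L as [|a L IH]; simpl; intros Hc H; auto.
  apply Rmax_lub; auto.
Qed.

Section Selection.
Variable N : R -> R.
Variable Ps : list bitile.

Definition mu : R := mass N Ps.

Definition big (Q : bitile) : Prop := mu / 2 < tile_density N Q.

Definition hi (P : bitile) : Prop := exists Q, In Q Ps /\ big Q /\ tile_le P Q.
Definition Phi : list bitile := filter (fun P => dec (hi P)) Ps.
Definition Plo : list bitile := filter (fun P => negb (dec (hi P))) Ps.

Definition maximal (Q : bitile) : Prop :=
  In Q Ps /\ big Q /\ forall Q', In Q' Ps -> big Q' -> tile_le Q Q' -> Q' = Q.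
Definition tops : list bitile := filter (fun Q => dec (maximal Q)) (nodup bitile_eq_dec Ps).

Definition top_of (P : bitile) : option bitile := find (fun Q => dec (tile_le P Q)) tops.
Definition tree_of (Q : bitile) : list bitile := filter (fun P => dec (top_of P = Some Q)) Ps.
Definition tree_datum (Q : bitile) : tree_data := (tree_of Q, (I_of Q, xi_of Q)).
Definition forest : list tree_data := map tree_datum tops.

Lemma in_tops Q : In Q tops <-> maximal Q.
Proof. unfold tops. rewrite filter_In, nodup_In, dec_true. unfold maximal. tauto. Qed.

Lemma NoDup_tops : NoDup tops.
Proof. apply NoDup_filter, NoDup_nodup. Qed.

Lemma in_Phi P : In P Phi <-> In P Ps /\ hi P.
Proof. unfold Phi. rewrite filter_In, dec_true. tauto. Qed.

Lemma in_Plo P : In P Plo <-> In P Ps /\ ~ hi P.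
Proof.
  unfold Plo. rewrite filter_In. destruct (dec (hi P)) eqn:E.
  - rewrite dec_true in E. simpl. split; [intros [_ H]; discriminate | tauto].
  - rewrite dec_false in E. simpl. tauto.
Qed.

Lemma in_tree Q P : In P (tree_of Q) <-> In P Ps /\ top_of P = Some Q.
Proof. unfold tree_of. rewrite filter_In, dec_true. tauto. Qed.

Lemma top_of_spec P Q : top_of P = Some Q -> maximal Q /\ tile_le P Q.
Proof.
  unfold top_of. intros H. apply find_some in H. destruct H as [H1 H2].
  rewrite in_tops in H1. rewrite dec_true in H2. auto.
Qed.

(* Above a big tile sits a maximal one: take a big tile above P of largest scale. *)
Lemma exists_maximal_above P Q : In Q Ps -> big Q -> tile_le P Q ->
  exists Q', maximal Q' /\ tile_le P Q'.
Proof.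
  intros HQ HB HPQ.
  set (C := filter (fun R => dec (big R /\ tile_le P R)) Ps).
  assert (HC : forall R, In R C <-> In R Ps /\ big R /\ tile_le P R)
    by (intro R; unfold C; rewrite filter_In, dec_true; tauto).
  destruct (list_argmax _ tj C) as (X & HX & Hm).
  { intro E. assert (HQC : In Q C) by (apply HC; auto). rewrite E in HQC. destruct HQC. }
  apply HC in HX. destruct HX as (HX1 & HX2 & HX3).
  exists X. split; [|auto]. split; [auto|]. split; [auto|].
  intros Q' HQ' HB' HXQ'. symmetry. apply tile_le_eq; auto.
  apply Hm. apply HC. split; [auto|]. split; [auto|]. eapply tile_le_trans; eauto.
Qed.

Lemma Ps_split P : In P Ps <-> In P Phi \/ In P Plo.
Proof.
  rewrite in_Phi, in_Plo. split; [|tauto].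
  intro H. destruct (classic (hi P)); tauto.
Qed.

Lemma Phi_Plo_disjoint P : In P Phi -> ~ In P Plo.
Proof. rewrite in_Phi, in_Plo. tauto. Qed.

Lemma Plo_mass : mass N Plo <= / 2 * mu.
Proof.
  pose proof (mass_nonneg N Ps) as Hmu. fold mu in Hmu.
  apply mass_le; [lra|]. intros P HP. rewrite in_Plo in HP. destruct HP as [HP Hn].
  destruct (Rle_dec (tile_density N P) (/ 2 * mu)) as [|Hg]; auto.
  exfalso. apply Hn. exists P. split; [auto|]. split; [unfold big; lra | apply tile_le_refl].
Qed.

Hypothesis Ps_convex : convex Ps.

(* High tiles form a down-set of Ps, low tiles an up-set; both are convex. *)
Lemma Phi_convex : convex Phi.
Proof.
  intros P P' P'' H1 H2 L1 L2. rewrite in_Phi in *.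
  destruct H1 as [H1 _], H2 as [H2 (Q & HQ & HB & HL)].
  split; [apply (Ps_convex P P' P''); auto|].
  exists Q. split; [auto|]. split; [auto|]. eapply tile_le_trans; eauto.
Qed.

Lemma Plo_convex : convex Plo.
Proof.
  intros P P' P'' H1 H2 L1 L2. rewrite in_Plo in *.
  destruct H1 as [H1 Hn], H2 as [H2 _].
  split; [apply (Ps_convex P P' P''); auto|].
  intros (Q & HQ & HB & HL). apply Hn.
  exists Q. split; [auto|]. split; [auto|]. eapply tile_le_trans; eauto.
Qed.

(* A tile between two tiles of the tree of Q is assigned to Q as well: every
   top above it lies above the lower tile, and Q lies above it. *)
Lemma tree_convex Q : convex (tree_of Q).
Proof.
  intros P P' P'' H1 H2 L1 L2. rewrite in_tree in *.
  destruct H1 as [H1 F1], H2 as [H2 F2].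
  split; [apply (Ps_convex P P' P''); auto|].
  unfold top_of in *. eapply find_stronger; [|exact F1|].
  - intros x _ Hx. rewrite dec_true in Hx |- *. eapply tile_le_trans; eauto.
  - rewrite dec_true. apply top_of_spec in F2. eapply tile_le_trans; [eauto | tauto].
Qed.

Lemma tree_of_is_tree Q : In Q tops -> is_tree (tree_of Q) (I_of Q) (xi_of Q).
Proof.
  intros HQ. split; [eapply in_dyad_nonneg, xi_in | split; [apply xi_nondyadic|]].
  intros P HP. apply in_tree in HP. destruct HP as [_ HP]. apply top_of_spec in HP.
  destruct HP as [_ [H1 H2]]. split; [auto|]. apply H2, xi_in.
Qed.

(* A high tile lies below some maximal big tile, hence is attached to a top. *)
Lemma Phi_is_union_of_trees P : In P Phi <-> exists T, In T forest /\ In P (fst T).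
Proof.
  rewrite in_Phi. split.
  - intros [HP (Q & HQ & HB & HL)].
    destruct (exists_maximal_above P Q HQ HB HL) as (X & HX & HPX).
    destruct (top_of P) as [Q0|] eqn:E.
    + exists (tree_datum Q0). split.
      * apply in_map, in_tops. apply top_of_spec in E. tauto.
      * simpl. apply in_tree. auto.
    + exfalso. unfold top_of in E. assert (HXt : In X tops) by (apply in_tops; auto).
      apply (find_none _ _ E) in HXt. rewrite dec_false in HXt. contradiction.
  - intros (T & HT & HP). apply in_map_iff in HT. destruct HT as (Q & <- & HQ).
    simpl in HP. apply in_tree in HP. destruct HP as [HP E]. split; [auto|].
    apply top_of_spec in E. destruct E as [(H1 & H2 & _) H3]. exists Q. auto.
Qed.

(* Trees at distinct positions of the forest have distinct tops, hence no common tile. *)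
Lemma trees_disjoint : forall i j d P,
  (i < length forest)%nat -> (j < length forest)%nat -> i <> j ->
  In P (fst (nth i forest d)) -> ~ In P (fst (nth j forest d)).
Proof.
  intros i j d P Hi Hj Hij HPi HPj. unfold forest in *. rewrite length_map in Hi, Hj.
  set (d0 := Bitile 0 0 0).
  rewrite (nth_indep _ d (tree_datum d0)), map_nth in HPi by (rewrite length_map; auto).
  rewrite (nth_indep _ d (tree_datum d0)), map_nth in HPj by (rewrite length_map; auto).
  simpl in HPi, HPj. apply in_tree in HPi, HPj.
  destruct HPi as [_ E1], HPj as [_ E2]. rewrite E1 in E2. injection E2 as E2.
  apply Hij. eapply NoDup_nth; eauto. apply NoDup_tops.
Qed.

Lemma forest_convex : is_convex_forest Phi forest.
Proof.
  split; [|apply Phi_convex]. split; [|split; [apply Phi_is_union_of_trees | apply trees_disjoint]].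
  intros T HT. apply in_map_iff in HT. destruct HT as (Q & <- & HQ).
  split; [apply tree_of_is_tree; auto | apply tree_convex].
Qed.

Hypothesis N_measurable : measurable_fun N.
Hypothesis Ps_in_unit : forall P, In P Ps -> in_P01 P.
Hypothesis mu_pos : 0 < mu.

Lemma big_top_length Q : big Q -> dlen (I_of Q) <= 2 / mu * leb_outer (E_set N Q).
Proof.
  unfold big, tile_density.
  set (d := dlen (I_of Q)). set (e := leb_outer (E_set N Q)). intros HB.
  assert (Hd : 0 < d) by apply pow2_pos.
  assert (Hdens : mu / 2 * d < e).
  { replace e with (e / d * d) by (field; lra). apply Rmult_lt_compat_r; lra. }
  apply Rlt_le. replace d with (2 / mu * (mu / 2 * d)) at 1 by (field; lra).
  apply Rmult_lt_compat_l; [apply Rdiv_lt_0_compat; lra | exact Hdens].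
Qed.

(* Distinct tops are incomparable maximal tiles, so their sets E are disjoint. *)
Lemma tops_E_disjoint Q Q' x : In Q tops -> In Q' tops -> Q <> Q' ->
  E_set N Q x -> E_set N Q' x -> False.
Proof.
  intros HQ HQ' Hne E1 E2. rewrite in_tops in HQ, HQ'.
  destruct HQ as (HQ1 & HQ2 & HQmax), HQ' as (HQ'1 & HQ'2 & HQ'max).
  destruct (E_sets_meet_comparable N Q Q' x E1 E2) as [L|L]; apply Hne.
  - symmetry. apply HQmax; auto.
  - apply HQ'max; auto.
Qed.

(* The sets E(Q) of the tops are disjoint measurable subsets of [0,1], so
   the lengths |I_Q| sum to at most (2/mass) |[0,1]| <= 4/mass. *)
Lemma forest_top_lengths : sum_top_lengths forest <= 4 / mu.
Proof.
  assert (Hin : forall Q, In Q tops -> In Q Ps /\ big Q)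
    by (intros Q HQ; rewrite in_tops in HQ; unfold maximal in HQ; tauto).
  assert (Hunit : forall x, family_union (E_set N) tops x -> 0 <= x <= 1).
  { intros x (Q & HQ & Hx & _). apply (Ps_in_unit Q); [apply Hin|]; auto. }
  assert (Hbd : bounded_set (family_union (E_set N) tops)).
  { exists 1. intros x Hx. apply Hunit in Hx. rewrite Rabs_right; lra. }
  assert (Hsum : family_sum (E_set N) tops <= 2).
  { rewrite outer_disjoint_family; auto.
    - replace 2 with (2 - 0) by ring.
      apply outer_le_interval; [lra|]. intros x Hx. apply Hunit in Hx. lra.
    - apply NoDup_tops.
    - intros Q _. apply E_set_measurable, N_measurable.
    - apply tops_E_disjoint. }
  assert (Hlen : sum_top_lengths forest <= 2 / mu * family_sum (E_set N) tops).
  { unfold forest. rewrite sum_top_lengths_map. apply list_sum_le_scaled. intros Q HQ. apply big_top_length, Hin, HQ. }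
  assert (0 < 2 / mu) by (apply Rdiv_lt_0_compat; lra).
  replace (4 / mu) with (2 / mu * 2) by (field; lra).
  eapply Rle_trans; [exact Hlen|]. apply Rmult_le_compat_l; lra.
Qed.

End Selection.

Theorem lemma5p1 :
  exists C : R, 0 < C /\
  forall (N : R -> R) (Ps : list bitile),
    nonneg_fun N -> measurable_fun N ->
    (forall P, In P Ps -> in_P01 P) ->
    convex Ps ->
    0 < mass N Ps ->
    exists (Phi Plo : list bitile) (F : list tree_data),
      (forall P, In P Ps <-> In P Phi \/ In P Plo) /\
      (forall P, In P Phi -> ~ In P Plo) /\
      convex Phi /\ convex Plo /\
      mass N Plo <= / 2 * mass N Ps /\
      is_convex_forest Phi F /\
      sum_top_lengths F <= C / mass N Ps.
Proof.
  exists 4. split; [lra|].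
  intros N Ps _ HN H01 HC Hmu.
  exists (Phi N Ps), (Plo N Ps), (forest N Ps).
  split; [apply Ps_split|].
  split; [apply Phi_Plo_disjoint|].
  split; [apply Phi_convex; auto|].
  split; [apply Plo_convex; auto|].
  split; [apply Plo_mass|].
  split; [apply forest_convex; auto|].
  apply forest_top_lengths; auto.
Qed.
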